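(* Let $\mathcal{G}$ be a compact group with normalized Haar measure and let $g\mapsto V_g$, $g\mapsto\tilde V_g$ be unitary representations of $\mathcal{G}$ on $\mathbb{C}^d$. Let $G=\{\overline{V_g}\otimes\tilde V_g: g\in\mathcal{G}\}$ and $G'=\{X\in\mathcal{M}_{d^2}: [X,Y]=0\ \forall Y\in G\}$. Let $|\Omega\rangle=d^{-1/2}\sum_j|j,j\rangle$, $\mathcal{S}=\{\rho\in\mathcal{M}_{d^2}:\rho\ge0,\ \operatorname{tr}_1\rho=\operatorname{tr}_2\rho=\mathbb{1}/d\}$, $\mathcal{U}=\mathrm{conv}\{(\mathbb{1}\otimes U)|\Omega\rangle\langle\Omega|(\mathbb{1}\otimes U^\dagger): U\text{ unitary}\}$, and $\mathcal{W}=\{W\in\mathcal{M}_{d^2}: W=W^\dagger,\ \operatorname{tr}[W\sigma]\ge0\ \forall\sigma\in\mathcal{U}\}$. Let $\rho\in\mathcal{S}\cap G'$. Then $\rho\in\mathcal{U}$ if and only if $\operatorname{tr}[W\rho]\ge0$ for all $W\in\mathcal{W}\cap G'$. Moreover, $$\inf\{\alpha_p+\alpha_n: \rho=\alpha_p\sigma_p-\alpha_n\sigma_n,\ \alpha_{p,n}\ge0,\ \sigma_{p,n}\in\mathcal{U}\}=\inf\{\alpha_p+\alpha_n: \rho=\alpha_p\sigma_p-\alpha_n\sigma_n,\ \alpha_{p,n}\ge0,\ \sigma_{p,n}\in\mathcal{U}\cap G'\},$$ and the same equality holds with $\alpha_p+\alpha_n$ replaced by $\alpha_n$ in both infima.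
   Context: The condition $\rho_T\in G'$ for the Jamiolkowski state $\rho_T=(\mathrm{id}\otimes T)(|\Omega\rangle\langle\Omega|)$ is equivalent to covariance of the channel $T$: $T(V_g\,\cdot\,V_g^\dagger)=\tilde V_gT(\cdot)\tilde V_g^\dagger$ for all $g$. $\overline{V_g}$ denotes the entrywise complex conjugate. *)

From HB Require Import structures.
From mathcomp Require Import all_boot all_order all_algebra.
From mathcomp Require Import spectral.
From mathcomp Require Import complex mxtens.
From mathcomp Require Import all_classical all_reals topology ereal normedtype.
Import numFieldTopology.Exports.

Set Implicit Arguments.
Unset Strict Implicit.
Unset Printing Implicit Defensive.

Import Order.TTheory GRing.Theory Num.Theory.
Local Open Scope ring_scope.
Local Open Scope classical_set_scope.
Local Open Scope complex_scope.

Definition is_compact_group (T : topologicalType)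
    (mul : T -> T -> T) (inv : T -> T) (e : T) : Prop :=
  [/\ (forall x y z, mul x (mul y z) = mul (mul x y) z),
      (forall x, mul e x = x /\ mul x e = x) &
      (forall x, mul (inv x) x = e /\ mul x (inv x) = e)] /\
  [/\ continuous (fun p : T * T => mul p.1 p.2),
      continuous inv,
      hausdorff_space T &
      compact [set: T]].

Section Quantum.
Variable R : realType.
Local Notation C := (R[i]).

Definition adjmx m n (A : 'M[C]_(m, n)) : 'M[C]_(n, m) :=
  \matrix_(i, j) Num.conj (A j i).

Definition conjmx_entry m n (A : 'M[C]_(m, n)) : 'M[C]_(m, n) :=
  map_mx Num.conj A.

(* Kronecker product, with basis |a,b> indexed by mxtens_index (a, b) = a*n+b *)
Definition kron m n p q (A : 'M[C]_(m, n)) (B : 'M[C]_(p, q))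
  : 'M[C]_(m * p, n * q) :=
  \matrix_(i, j) (A (mxtens_unindex i).1 (mxtens_unindex j).1 *
                  B (mxtens_unindex i).2 (mxtens_unindex j).2).

Definition ptrace1 d (X : 'M[C]_(d * d)) : 'M[C]_d :=
  \matrix_(b, e) \sum_(a < d) X (mxtens_index (a, b)) (mxtens_index (a, e)).
Definition ptrace2 d (X : 'M[C]_(d * d)) : 'M[C]_d :=
  \matrix_(a, c) \sum_(b < d) X (mxtens_index (a, b)) (mxtens_index (c, b)).

Definition hermitian n (A : 'M[C]_n) : Prop := adjmx A = A.

Definition psd n (A : 'M[C]_n) : Prop :=
  hermitian A /\ forall v : 'cV[C]_n, 0 <= (adjmx v *m A *m v) 0 0.

Definition omega d : 'cV[C]_(d * d) :=
  \col_k (if (mxtens_unindex k).1 == (mxtens_unindex k).2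
          then (sqrtC (d%:R : C))^-1 else 0).

Definition maxent d (U : 'M[C]_d) : 'M[C]_(d * d) :=
  kron 1%:M U *m (omega d *m adjmx (omega d)) *m kron 1%:M (adjmx U).

Definition conv n (A : set 'M[C]_n) : set 'M[C]_n :=
  [set X | exists k (lam : 'I_k -> R) (Y : 'I_k -> 'M[C]_n),
     [/\ (forall i, 0 <= lam i), \sum_(i < k) lam i = 1,
         (forall i, A (Y i)) &
         X = \sum_(i < k) (lam i)%:C *: Y i]].

Definition Sset d : set 'M[C]_(d * d) :=
  [set rho | psd rho /\ ptrace1 rho = (d%:R^-1) %:M /\
             ptrace2 rho = (d%:R^-1) %:M].

Definition Uset d : set 'M[C]_(d * d) :=
  conv [set maxent U | U in [set U : 'M[C]_d | U \is unitarymx]].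

Definition Wset d : set 'M[C]_(d * d) :=
  [set W | hermitian W /\ forall sigma, @Uset d sigma -> 0 <= \tr (W *m sigma)].

Definition commutant d (T : Type) (V Vt : T -> 'M[C]_d) : set 'M[C]_(d * d) :=
  [set X | forall g, let Y := kron (conjmx_entry (V g)) (Vt g) in
                     X *m Y = Y *m X].

Definition decomps d (A : set 'M[C]_(d * d)) (rho : 'M[C]_(d * d))
  : set (R * R) :=
  [set a | exists sp sn, [/\ 0 <= a.1, 0 <= a.2, A sp, A sn &
            rho = a.1%:C *: sp - a.2%:C *: sn]].

Definition unitary_rep (T : topologicalType) (mul : T -> T -> T) (e : T) d
    (V : T -> 'M[C]_d) : Prop :=
  [/\ V e = 1%:M,
      (forall g h, V (mul g h) = V g *m V h),
      (forall g, V g \is unitarymx) &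
      (forall i j, continuous (fun g => complex.Re (V g i j)) /\
                   continuous (fun g => complex.Im (V g i j)))].

End Quantum.

Arguments Sset {R} d _.
Arguments Uset {R} d _.
Arguments Wset {R} d _.
Arguments omega {R} d.
Arguments commutant {R} d {T} V Vt _.

From Pilot Require Import Defs.
From HB Require Import structures.
From mathcomp Require Import all_boot all_order all_algebra.
From mathcomp Require Import spectral complex mxtens.
From mathcomp Require Import all_classical all_reals topology ereal normedtype derive.
From mathcomp Require Import ring lra.
Import numFieldTopology.Exports.
Import numFieldNormedType.Exports.
Import Order.TTheory GRing.Theory Num.Theory.
Local Open Scope ring_scope.
Local Open Scope classical_set_scope.
Local Open Scope complex_scope.

Set Implicit Arguments.
Unset Strict Implicit.
Unset Printing Implicit Defensive.

(* The set U is convex, and it is compact: by Carathéodory's theorem every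
   point of U is a convex combination of a bounded number of maximally
   entangled states, so U is a continuous image of a compact set of
   parameters.  Hence U has a point s nearest to rho in the Frobenius norm,
   unique by strict convexity of the norm.  Conjugation by the unitaries
   conj(V g) (x) Vt g preserves U, rho and the norm, so it fixes s, i.e.
   s lies in G'.  If rho is not in U, the hyperplane through s orthogonal to
   s - rho gives a witness W in G' with tr (W rho) = - |s - rho|^2 < 0.
   Likewise, for fixed weights (ap, an) the decomposition
   rho = ap sp - an sn with sp, sn in U minimizing |sp|^2 + |sn|^2 is unique,
   hence invariant, so sp and sn lie in G': both infima range over the same
   set of weights.  Only the unitarity of each conj(V g) (x) Vt g is used:
   no Haar averaging is needed, and neither the compactness of the group nor
   the continuity of the representations. *)

Section Adjoint.
Variable R : realType.
Local Notation C := (R[i]).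

Lemma adjmxK m n (A : 'M[C]_(m, n)) : adjmx (adjmx A) = A.
Proof. by apply/matrixP => i j; rewrite !mxE conjCK. Qed.

Lemma adjmxD m n (A B : 'M[C]_(m, n)) : adjmx (A + B) = adjmx A + adjmx B.
Proof. by apply/matrixP => i j; rewrite !mxE rmorphD. Qed.

Lemma adjmxN m n (A : 'M[C]_(m, n)) : adjmx (- A) = - adjmx A.
Proof. by apply/matrixP => i j; rewrite !mxE rmorphN. Qed.

Lemma adjmxB m n (A B : 'M[C]_(m, n)) : adjmx (A - B) = adjmx A - adjmx B.
Proof. by rewrite adjmxD adjmxN. Qed.

Lemma adjmxZ m n (c : C) (A : 'M[C]_(m, n)) :
  adjmx (c *: A) = Num.conj c *: adjmx A.
Proof. by apply/matrixP => i j; rewrite !mxE rmorphM. Qed.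

Lemma adjmxM m n p (A : 'M[C]_(m, n)) (B : 'M[C]_(n, p)) :
  adjmx (A *m B) = adjmx B *m adjmx A.
Proof.
apply/matrixP => i j; rewrite !mxE rmorph_sum; apply: eq_bigr => k _.
by rewrite !mxE rmorphM mulrC.
Qed.

Lemma adjmx_scalar n (c : C) : adjmx (c%:M : 'M[C]_n) = (Num.conj c)%:M.
Proof. by apply/matrixP => i j; rewrite !mxE eq_sym rmorphMn. Qed.

Lemma adjmx1 n : adjmx (1%:M : 'M[C]_n) = 1%:M.
Proof. by rewrite adjmx_scalar conjC1. Qed.

Lemma adjmx_sum m n k (F : 'I_k -> 'M[C]_(m, n)) :
  adjmx (\sum_(i < k) F i) = \sum_(i < k) adjmx (F i).
Proof.
apply/matrixP => i j; rewrite mxE !summxE rmorph_sum.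
by apply: eq_bigr => l _; rewrite mxE.
Qed.

Lemma adjmx_col_mx m1 m2 n (A : 'M[C]_(m1, n)) (B : 'M[C]_(m2, n)) :
  adjmx (col_mx A B) = row_mx (adjmx A) (adjmx B).
Proof. by apply/matrixP => i j; rewrite !mxE; case: splitP => k _; rewrite mxE. Qed.

Lemma mxtrace_sum n k (F : 'I_k -> 'M[C]_n) :
  \tr (\sum_(i < k) F i) = \sum_(i < k) \tr (F i).
Proof. exact: raddf_sum. Qed.

Lemma mxtraceB n (A B : 'M[C]_n) : \tr (A - B) = \tr A - \tr B.
Proof. exact: raddfB. Qed.

Lemma mxtrace_adj n (A : 'M[C]_n) : \tr (adjmx A) = Num.conj (\tr A).
Proof. by rewrite /mxtrace rmorph_sum; apply: eq_bigr => i _; rewrite mxE. Qed.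

Lemma unitarymx_adjP n (U : 'M[C]_n) :
  reflect (U *m adjmx U = 1%:M) (U \is unitarymx).
Proof.
have -> : adjmx U = (U ^t*)%sesqui by apply/matrixP => i j; rewrite !mxE.
exact: unitarymxP.
Qed.

Lemma unitary_adj_mulmx n (U : 'M[C]_n) : U \is unitarymx -> adjmx U *m U = 1%:M.
Proof. by move/unitarymx_adjP/mulmx1C. Qed.

Lemma adjmx_unitary n (U : 'M[C]_n) : U \is unitarymx -> adjmx U \is unitarymx.
Proof. by move=> U_unitary; apply/unitarymx_adjP; rewrite adjmxK unitary_adj_mulmx. Qed.

Lemma unitary_conj_commute n (U X : 'M[C]_n) : U \is unitarymx ->
  (X *m U = U *m X) <-> (U *m X *m adjmx U = X).
Proof.
move=> U_unitary; split => [<-|UX].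
  by rewrite -mulmxA (unitarymx_adjP _ U_unitary) mulmx1.
by rewrite -{1}UX -!mulmxA unitary_adj_mulmx // mulmx1.
Qed.

Lemma kron_mul m n p q r s (A : 'M[C]_(m, n)) (B : 'M[C]_(p, q))
    (A' : 'M[C]_(n, r)) (B' : 'M[C]_(q, s)) :
  kron A B *m kron A' B' = kron (A *m A') (B *m B').
Proof. exact: tensmx_mul. Qed.

Lemma kron_adj m n p q (A : 'M[C]_(m, n)) (B : 'M[C]_(p, q)) :
  adjmx (kron A B) = kron (adjmx A) (adjmx B).
Proof. by apply/matrixP => i j; rewrite !mxE rmorphM. Qed.

Lemma kron11 m n : kron (1%:M : 'M[C]_m) (1%:M : 'M[C]_n) = 1%:M.
Proof.
apply/matrixP => i j; case: (mxtens_indexP i) => a b; case: (mxtens_indexP j) => a' b'.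
rewrite [LHS]tensmxE !mxE (can_eq (@mxtens_indexK _ _)) xpair_eqE.
by rewrite -natrM mulnb.
Qed.

Lemma kron_unitary m n (A : 'M[C]_m) (B : 'M[C]_n) :
  A \is unitarymx -> B \is unitarymx -> kron A B \is unitarymx.
Proof.
move=> A_unitary B_unitary; apply/unitarymx_adjP.
by rewrite kron_adj kron_mul !(unitarymx_adjP _ _) // kron11.
Qed.

Lemma sum_mxtens m n (F : 'I_(m * n) -> C) :
  \sum_(k < m * n) F k = \sum_(a < m) \sum_(b < n) F (mxtens_index (a, b)).
Proof.
rewrite pair_big /= (reindex (@mxtens_index m n)) /=; last first.
  by exists (@mxtens_unindex m n) => k _; rewrite (mxtens_indexK, mxtens_unindexK).
by apply: eq_bigr => -[a b].
Qed.

End Adjoint.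

(** * The real Frobenius inner product *)

Section Frobenius.
Variable R : realType.
Local Notation C := (R[i]).

Definition frob_dot m n (X Y : 'M[C]_(m, n)) : R := complex.Re (\tr (X *m adjmx Y)).
Definition frob2 m n (X : 'M[C]_(m, n)) : R := frob_dot X X.

Lemma conj_real (t : R) : Num.conj (t%:C : C) = t%:C.
Proof. exact: conjc_real. Qed.

Lemma Re_conj (z : C) : complex.Re (Num.conj z) = complex.Re z.
Proof. by case: z. Qed.

Lemma Re_realM (t : R) (z : C) : complex.Re (t%:C * z) = t * complex.Re z.
Proof. by case: z => a b /=; rewrite mul0r subr0. Qed.

Lemma Im_realM (t : R) (z : C) : complex.Im (t%:C * z) = t * complex.Im z.
Proof. by case: z => a b /=; rewrite mul0r addr0. Qed.

Lemma real_conj_eq (z : C) : Num.conj z = z -> z = (complex.Re z)%:C.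
Proof. by case: z => a b /= [] b_opp; congr (_ +i* _); lra. Qed.

Variables m n : nat.
Implicit Types X Y Z : 'M[C]_(m, n).

Lemma frob_dotC X Y : frob_dot X Y = frob_dot Y X.
Proof. by rewrite /frob_dot -[Y *m _]adjmxK adjmxM adjmxK mxtrace_adj Re_conj. Qed.

Lemma frob_dotDr X Y Z : frob_dot X (Y + Z) = frob_dot X Y + frob_dot X Z.
Proof. by rewrite /frob_dot adjmxD mulmxDr mxtraceD raddfD. Qed.

Lemma frob_dotNr X Y : frob_dot X (- Y) = - frob_dot X Y.
Proof. by rewrite /frob_dot adjmxN mulmxN !raddfN. Qed.

Lemma frob_dotBr X Y Z : frob_dot X (Y - Z) = frob_dot X Y - frob_dot X Z.
Proof. by rewrite frob_dotDr frob_dotNr. Qed.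

Lemma frob_dotZr (t : R) X Y : frob_dot X (t%:C *: Y) = t * frob_dot X Y.
Proof.
by rewrite /frob_dot adjmxZ conj_real -scalemxAr mxtraceZ Re_realM.
Qed.

Lemma frob2D X Y : frob2 (X + Y) = frob2 X + frob2 Y + 2 * frob_dot X Y.
Proof.
rewrite /frob2 frob_dotDr ![frob_dot (X + Y) _]frob_dotC !frob_dotDr.
by rewrite [frob_dot Y X]frob_dotC; ring.
Qed.

Lemma frob2N X : frob2 (- X) = frob2 X.
Proof. by rewrite /frob2 frob_dotNr frob_dotC frob_dotNr opprK. Qed.

Lemma frob2Z (t : R) X : frob2 (t%:C *: X) = t ^+ 2 * frob2 X.
Proof. by rewrite /frob2 frob_dotZr frob_dotC frob_dotZr mulrA -expr2. Qed.

Lemma frob2_line (t : R) X Y :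
  frob2 (X + t%:C *: Y) = frob2 X + 2 * t * frob_dot X Y + t ^+ 2 * frob2 Y.
Proof. by rewrite frob2D frob2Z frob_dotZr; ring. Qed.

Lemma frob2_midpoint X Y :
  frob2 ((2^-1 : R)%:C *: (X + Y)) = 2^-1 * (frob2 X + frob2 Y) - 4^-1 * frob2 (X - Y).
Proof. by rewrite frob2Z frob2D [frob2 (X - Y)]frob2D frob2N frob_dotNr; field. Qed.

Lemma mxtrace_mul_adj X : \tr (X *m adjmx X) = \sum_i \sum_j `|X i j| ^+ 2.
Proof.
by apply: eq_bigr => i _; rewrite mxE; apply: eq_bigr => j _; rewrite mxE sqr_normc.
Qed.

Lemma frob2E X : (frob2 X)%:C = \tr (X *m adjmx X).
Proof.
apply: RRe_real; apply: ger0_real; rewrite mxtrace_mul_adj.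
by do 2 (apply: sumr_ge0 => ? _); rewrite exprn_ge0.
Qed.

Lemma frob2_ge0 X : 0 <= frob2 X.
Proof.
rewrite -ler0c frob2E mxtrace_mul_adj.
by do 2 (apply: sumr_ge0 => ? _); rewrite exprn_ge0.
Qed.

Lemma frob2_eq0 X : frob2 X = 0 -> X = 0.
Proof.
move=> X0; have : \tr (X *m adjmx X) = 0 by rewrite -frob2E X0.
have sqr_ge0 (x : C) : 0 <= `|x| ^+ 2 by rewrite exprn_ge0.
rewrite mxtrace_mul_adj => /psumr_eq0P X0i; apply/matrixP => i j.
have /psumr_eq0P/(_ j isT) : \sum_j `|X i j| ^+ 2 = 0.
  by apply: X0i => // k _; apply: sumr_ge0.
by move=> Xij0; rewrite mxE; apply/eqP; rewrite -normr_eq0 -sqrf_eq0 Xij0.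
Qed.

Lemma mxtrace_hermitian_mul (H S : 'M[C]_m) :
  Defs.hermitian H -> Defs.hermitian S -> \tr (H *m S) = (frob_dot H S)%:C.
Proof.
move=> H_hermitian S_hermitian; rewrite /frob_dot S_hermitian; apply: real_conj_eq.
by rewrite -mxtrace_adj adjmxM H_hermitian S_hermitian mxtrace_mulC.
Qed.

End Frobenius.

Lemma frob2_col_mx (R : realType) m1 m2 n
    (A : 'M[R[i]]_(m1, n)) (B : 'M[R[i]]_(m2, n)) :
  frob2 (col_mx A B) = frob2 A + frob2 B.
Proof. by rewrite /frob2 /frob_dot adjmx_col_mx mul_col_row mxtrace_block raddfD. Qed.

Lemma frob2_unitary_mull (R : realType) m n (U : 'M[R[i]]_m) (X : 'M[R[i]]_(m, n)) :
  U \is unitarymx -> frob2 (U *m X) = frob2 X.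
Proof.
move=> U_unitary; rewrite /frob2 /frob_dot adjmxM mulmxA mxtrace_mulC !mulmxA.
by rewrite unitary_adj_mulmx // mul1mx.
Qed.

Lemma frob2_unitary_mulr (R : realType) m n (U : 'M[R[i]]_n) (X : 'M[R[i]]_(m, n)) :
  U \is unitarymx -> frob2 (X *m U) = frob2 X.
Proof.
move=> U_unitary; rewrite /frob2 /frob_dot adjmxM mulmxA -[X *m U *m _]mulmxA.
by rewrite (unitarymx_adjP _ U_unitary) mulmx1.
Qed.

Lemma frob2_unitary_conj (R : realType) n (U X : 'M[R[i]]_n) :
  U \is unitarymx -> frob2 (U *m X *m adjmx U) = frob2 X.
Proof.
move=> U_unitary.
by rewrite frob2_unitary_mulr ?adjmx_unitary // frob2_unitary_mull.
Qed.

(** * Nearest points of convex sets *)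

Section ConvexNearest.
Variable R : realType.
Local Notation C := (R[i]).
Variables m n : nat.
Implicit Types (K : set 'M[C]_(m, n)) (c x y : 'M[C]_(m, n)).

Definition convex_mx K := forall x y (t : R), 0 <= t <= 1 -> K x -> K y ->
  K (t%:C *: x + (1 - t)%:C *: y).

Definition nearest K c x := K x /\ forall y, K y -> frob2 (x - c) <= frob2 (y - c).

Lemma nearest_unique K c x y : convex_mx K -> nearest K c x -> nearest K c y -> x = y.
Proof.
move=> convK [Kx xmin] [Ky ymin].
have half01 : 0 <= (2^-1 : R) <= 1 by rewrite invr_ge0 invf_le1 ?ler1n ?ler0n.
have := xmin _ (convK _ _ _ half01 Kx Ky).
have -> : (2^-1 : R)%:C *: x + (1 - 2^-1)%:C *: y - c =
          (2^-1 : R)%:C *: ((x - c) + (y - c)).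
  by apply/matrixP => i j; rewrite !mxE rmorphB rmorph1 rmorphV ?unitfE //=; field.
rewrite frob2_midpoint; have := xmin _ Ky; have := ymin _ Kx.
have := frob2_ge0 (x - c - (y - c)) => ? y_far x_far mid_far.
have /frob2_eq0/eqP : frob2 (x - c - (y - c)) = 0 by lra.
by rewrite opprB addrA subrK subr_eq0 => /eqP.
Qed.

Lemma nearest_fixed K c x (f : 'M[C]_(m, n) -> 'M[C]_(m, n)) :
  convex_mx K -> nearest K c x -> (forall y, K y -> K (f y)) ->
  (forall y, frob2 (f y - c) = frob2 (y - c)) -> f x = x.
Proof.
move=> convK [Kx xmin] fK fdist.
have fx_near : nearest K c (f x) by split=> [|y /xmin]; [exact: fK | rewrite fdist].
exact: nearest_unique convK fx_near (conj Kx xmin).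
Qed.

Lemma ge0_first_order (a b : R) : 0 <= b ->
  (forall t, 0 < t <= 1 -> 0 <= 2 * t * a + t ^+ 2 * b) -> 0 <= a.
Proof.
move=> b0 small_t_ge0; rewrite leNgt; apply/negP => a0.
pose t := - a / (- a + b).
have ab0 : 0 < - a + b by rewrite ltr_wpDr // oppr_gt0.
have t0 : 0 < t by rewrite divr_gt0 // oppr_gt0.
have t1 : t <= 1 by rewrite ler_pdivrMr // mul1r lerDl.
have tb : t * b <= - a by rewrite mulrAC ler_pdivrMr //; nra.
have := small_t_ge0 t; rewrite t0 t1 => /(_ isT); nra.
Qed.

Lemma nearest_variational K c x y : convex_mx K -> nearest K c x -> K y ->
  0 <= frob_dot (x - c) (y - x).
Proof.
move=> convK [Kx xmin] Ky; apply: (ge0_first_order (frob2_ge0 (y - x))).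
move=> t /andP[t0 t1]; have t01 : 0 <= t <= 1 by rewrite ltW.
have := xmin _ (convK _ _ _ t01 Ky Kx).
have -> : t%:C *: y + (1 - t)%:C *: x - c = (x - c) + t%:C *: (y - x).
  by apply/matrixP => i j; rewrite !mxE rmorphB rmorph1 /=; ring.
by rewrite frob2_line; lra.
Qed.

Definition convex_comb (A : set 'M[C]_(m, n)) k x :=
  exists (lam : 'I_k -> R) (Y : 'I_k -> 'M[C]_(m, n)),
    [/\ (forall i, 0 <= lam i), \sum_i lam i = 1, (forall i, A (Y i)) &
        x = \sum_i (lam i)%:C *: Y i].

Lemma convex_combD A k1 k2 x1 x2 (t : R) : 0 <= t <= 1 ->
  convex_comb A k1 x1 -> convex_comb A k2 x2 ->
  convex_comb A (k1 + k2) (t%:C *: x1 + (1 - t)%:C *: x2).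
Proof.
move=> /andP[t0 t1] [l1 [Y1 [l1_ge0 l1_sum AY1 ->]]] [l2 [Y2 [l2_ge0 l2_sum AY2 ->]]].
exists (fun i => match fintype.split i with inl j => t * l1 j | inr j => (1 - t) * l2 j end).
exists (fun i => match fintype.split i with inl j => Y1 j | inr j => Y2 j end).
split=> [i||i|].
- by case: (fintype.split i) => j; rewrite mulr_ge0 ?subr_ge0.
- rewrite big_split_ord /=.
  under eq_bigr do rewrite (unsplitK (inl _ _)).
  under [X in _ + X]eq_bigr do rewrite (unsplitK (inr _ _)).
  by rewrite -!mulr_sumr l1_sum l2_sum !mulr1 addrC subrK.
- by case: (fintype.split i).
- rewrite big_split_ord !scaler_sumr; congr (_ + _); apply: eq_bigr => j _;
  by rewrite (unsplitK (inl _ j), unsplitK (inr _ j)) scalerA rmorphM.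
Qed.

End ConvexNearest.

Lemma conv_convex (R : realType) n (A : set 'M[R[i]]_n) : convex_mx (conv A).
Proof. by move=> x y t t01 [k1 x1] [k2 x2]; exists (k1 + k2)%N; apply: convex_combD. Qed.

(** * Carathéodory's theorem *)

Section Caratheodory.
Variables (R : realType) (m n : nat).
Local Notation C := (R[i]).

(* One more than the real dimension of ['M[C]_(m, n)]. *)
Definition carath_bound := (1 + (m * n + m * n))%N.

Lemma left_kernel_nonzero k c (A : 'M[R]_(k, c)) : (c < k)%N ->
  exists2 mu : 'rV[R]_k, mu != 0 & mu *m A = 0.
Proof.
move=> ck; have kerA_rank : (0 < \rank (kermx A))%N.
  by rewrite mxrank_ker subn_gt0 (leq_ltn_trans (rank_leq_col A)).
have [i nz_i] : exists i, row i (kermx A) != 0.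
  apply/boolp.not_existsP => all0; move: kerA_rank.
  rewrite (_ : kermx A = 0) ?mxrank0 //; apply/row_matrixP => i.
  by rewrite row0; have := all0 i; case: eqP.
by exists (row i (kermx A)); rewrite // -row_mul mulmx_ker row0.
Qed.

Lemma exists_gt0_sum0 k (mu : 'I_k -> R) :
  \sum_i mu i = 0 -> (exists i, mu i != 0) -> exists i, 0 < mu i.
Proof.
move=> mu_sum [i0 mu_i0]; apply/boolp.not_existsP => mu_le0; move/negP: mu_i0; apply.
have mu_le0' j : 0 <= - mu j by rewrite oppr_ge0 leNgt; apply/negP; exact: mu_le0.
have /psumr_eq0P/(_ i0 isT)/eqP : \sum_i - mu i = 0 by rewrite sumrN mu_sum oppr0.
by rewrite oppr_eq0; apply.
Qed.

Lemma affine_dependence k (Y : 'I_k -> 'M[C]_(m, n)) : (carath_bound < k)%N ->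
  exists mu : 'I_k -> R,
    [/\ exists i, 0 < mu i, \sum_i mu i = 0 & \sum_i (mu i)%:C *: Y i = 0].
Proof.
move=> k_big.
pose A : 'M[R]_(k, carath_bound) := row_mx (const_mx 1)
  (row_mx (\matrix_(i, j) complex.Re (mxvec (Y i) 0 j))
          (\matrix_(i, j) complex.Im (mxvec (Y i) 0 j))).
have [mu mu_nz muA] := left_kernel_nonzero A k_big.
have colA j : \sum_i mu 0 i * A i j = 0.
  by have /matrixP/(_ 0 j) := muA; rewrite !mxE.
have mu_sum : \sum_i mu 0 i = 0.
  by rewrite -[RHS](colA (lshift _ 0)); apply: eq_bigr => i _; rewrite row_mxEl mxE mulr1.
exists (mu 0); split => //.
  apply: exists_gt0_sum0 => //; apply/boolp.not_existsP => mu0; move/eqP: mu_nz; apply.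
  by apply/rowP => i; rewrite mxE; have := mu0 i; case: eqP.
apply/matrixP => a b; rewrite summxE mxE; apply/eqP; rewrite eq_complex /=; apply/andP.
rewrite !raddf_sum /=.
split; apply/eqP; [rewrite -[RHS](colA (rshift 1 (lshift _ (mxvec_index a b))))
                  | rewrite -[RHS](colA (rshift 1 (rshift _ (mxvec_index a b))))];
  apply: eq_bigr => i _; rewrite ?row_mxEr ?row_mxEl !mxE mxvecE.
- exact: Re_realM.
- exact: Im_realM.
Qed.

Variable A : set 'M[C]_(m, n).

Lemma convex_comb_shrink k x : (carath_bound < k.+1)%N ->
  convex_comb A k.+1 x -> convex_comb A k x.
Proof.
move=> k_big [lam [Y [lam_ge0 lam_sum AY ->]]].
(* Slide the weights along an affine dependence until the first one vanishes. *)
have [mu [[i0 mu_i0] mu_sum muY]] := affine_dependence Y k_big.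
case: (arg_minP (P := [pred i | 0 < mu i]) (fun i => lam i / mu i) mu_i0).
move=> j mu_j lam_mu_min.
pose t := lam j / mu j; pose lam' i := lam i - t * mu i.
have lam'_j : lam' j = 0 by rewrite /lam' /t divfK ?subrr // gt_eqF.
exists (fun i => lam' (lift j i)), (fun i => Y (lift j i)); split => //.
- move=> i; rewrite /lam' subr_ge0; have [mu_i|] := ltP 0 (mu (lift j i)).
    by rewrite -ler_pdivlMr // lam_mu_min.
  by move/(mulr_ge0_le0 (divr_ge0 (lam_ge0 j) (ltW mu_j)))/le_trans; apply.
- have : \sum_i lam' i = 1 by rewrite sumrB -mulr_sumr mu_sum mulr0 subr0.
  by rewrite (bigD1_ord j) //= lam'_j add0r.
- have <- : \sum_i (lam' i)%:C *: Y i = \sum_i (lam i)%:C *: Y i.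
    under eq_bigr do rewrite rmorphB rmorphM scalerBl -scalerA.
    by rewrite sumrB -scaler_sumr muY scaler0 subr0.
  by rewrite (bigD1_ord j) //= lam'_j scale0r add0r.
Qed.

Lemma convex_comb_grow k x : (0 < k)%N -> convex_comb A k x -> convex_comb A k.+1 x.
Proof.
move=> k_gt0 [lam [Y [lam_ge0 lam_sum AY ->]]].
pose lam' i := if unlift ord0 i is Some j then lam j else 0.
pose Y' i := if unlift ord0 i is Some j then Y j else Y (Ordinal k_gt0).
exists lam', Y'; split.
- by move=> i; rewrite /lam'; case: (unlift _ i).
- by rewrite big_ord_recl /lam' unlift_none add0r; under eq_bigr do rewrite liftK.
- by move=> i; rewrite /Y'; case: (unlift _ i).
- rewrite big_ord_recl /lam' unlift_none scale0r add0r.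
  by under [RHS]eq_bigr do rewrite /Y' liftK.
Qed.

Lemma convex_comb_bound k x : (0 < k)%N -> convex_comb A k x ->
  convex_comb A carath_bound x.
Proof.
have [k_big _|k_small] := leqP carath_bound k.
  elim: k k_big => [|k IHk]; first by rewrite leqn0.
  rewrite leq_eqVlt => /orP[/eqP <- //|k_big cx]; apply: IHk => //.
  exact: convex_comb_shrink.
move=> k_gt0; rewrite -(subnKC (ltnW k_small)).
elim: (carath_bound - k)%N => [|l IHl]; first by rewrite addn0.
by move=> cx; rewrite addnS; apply: convex_comb_grow (IHl cx); rewrite ltn_addr.
Qed.

End Caratheodory.

Section ContinuityC.
Variables (R : realType) (T : topologicalType).
Local Notation C := (R[i]).

Definition continuousC (f : T -> C) :=
  continuous (fun p => complex.Re (f p)) /\ continuous (fun p => complex.Im (f p)).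

Definition continuous_mx m n (F : T -> 'M[C]_(m, n)) :=
  forall i j, continuousC (fun p => F p i j).

Lemma continuous_sumr k (F : 'I_k -> T -> R) : (forall i, continuous (F i)) ->
  continuous (fun p => \sum_(i < k) F i p).
Proof.
by move=> Fc; apply: continuous_big => [|i _]; [exact: add_continuous|exact: Fc].
Qed.

Lemma continuousC_cst (c : C) : continuousC (fun _ => c).
Proof. by split; apply: cst_continuous. Qed.

Lemma continuousC_real (a : T -> R) : continuous a -> continuousC (fun p => (a p)%:C).
Proof. by split => //; apply: cst_continuous. Qed.

Lemma continuousC_ext (f g : T -> C) : (forall p, f p = g p) ->
  continuousC g -> continuousC f.
Proof. by move=> /boolp.funext ->. Qed.

Lemma continuousC_pair (a b : T -> R) : continuous a -> continuous b ->
  continuousC (fun p => a p +i* b p).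
Proof. by []. Qed.

Lemma continuousC_D (f g : T -> C) : continuousC f -> continuousC g ->
  continuousC (fun p => f p + g p).
Proof.
move=> [fRe fIm] [gRe gIm].
apply: (continuousC_ext (g := fun p => (complex.Re (f p) + complex.Re (g p)) +i*
                                       (complex.Im (f p) + complex.Im (g p)))).
  by move=> p; case: (f p); case: (g p).
by apply: continuousC_pair => p;
  [exact: continuousD (fRe p) (gRe p) | exact: continuousD (fIm p) (gIm p)].
Qed.

Lemma continuousC_N (f : T -> C) : continuousC f -> continuousC (fun p => - f p).
Proof.
move=> [fRe fIm].
apply: (continuousC_ext (g := fun p => (- complex.Re (f p)) +i* (- complex.Im (f p)))).
  by move=> p; case: (f p).
by apply: continuousC_pair => p; [exact: continuousN (fRe p) | exact: continuousN (fIm p)].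
Qed.

Lemma continuousC_M (f g : T -> C) : continuousC f -> continuousC g ->
  continuousC (fun p => f p * g p).
Proof.
move=> [fRe fIm] [gRe gIm].
apply: (continuousC_ext (g := fun p =>
  (complex.Re (f p) * complex.Re (g p) - complex.Im (f p) * complex.Im (g p)) +i*
  (complex.Re (f p) * complex.Im (g p) + complex.Im (f p) * complex.Re (g p)))).
  by move=> p; case: (f p); case: (g p).
apply: continuousC_pair => p.
  exact: continuousD (continuousM (fRe p) (gRe p))
                     (continuousN (continuousM (fIm p) (gIm p))).
exact: continuousD (continuousM (fRe p) (gIm p)) (continuousM (fIm p) (gRe p)).
Qed.

Lemma continuousC_conj (f : T -> C) : continuousC f ->
  continuousC (fun p => Num.conj (f p)).
Proof.
move=> [fRe fIm].
apply: (continuousC_ext (g := fun p => complex.Re (f p) +i* (- complex.Im (f p)))).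
  by move=> p; case: (f p).
by apply: continuousC_pair => // p; exact: continuousN (fIm p).
Qed.

Lemma continuousC_sum k (F : 'I_k -> T -> C) : (forall i, continuousC (F i)) ->
  continuousC (fun p => \sum_(i < k) F i p).
Proof.
move=> Fc; apply: (continuousC_ext (g := fun p =>
  (\sum_i complex.Re (F i p)) +i* (\sum_i complex.Im (F i p)))).
  by move=> p; apply/eqP; rewrite eq_complex /= !raddf_sum !eqxx.
by apply: continuousC_pair; apply: continuous_sumr => i; case: (Fc i).
Qed.

Section Matrix.
Variables m n : nat.
Implicit Types F G : T -> 'M[C]_(m, n).

Lemma continuous_mx_cst (A : 'M[C]_(m, n)) : continuous_mx (fun _ => A).
Proof. by move=> i j; apply: continuousC_cst. Qed.

Lemma continuous_mxD F G : continuous_mx F -> continuous_mx G ->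
  continuous_mx (fun p => F p + G p).
Proof.
move=> Fc Gc i j; apply: (continuousC_ext (g := fun p => F p i j + G p i j)).
  by move=> p; rewrite mxE.
exact: continuousC_D.
Qed.

Lemma continuous_mxN F : continuous_mx F -> continuous_mx (fun p => - F p).
Proof.
move=> Fc i j; apply: (continuousC_ext (g := fun p => - F p i j)).
  by move=> p; rewrite mxE.
exact: continuousC_N.
Qed.

Lemma continuous_mxB F G : continuous_mx F -> continuous_mx G ->
  continuous_mx (fun p => F p - G p).
Proof. by move=> Fc Gc; apply: continuous_mxD => //; apply: continuous_mxN. Qed.

Lemma continuous_mxZ (f : T -> C) F : continuousC f -> continuous_mx F ->
  continuous_mx (fun p => f p *: F p).
Proof.
move=> fc Fc i j; apply: (continuousC_ext (g := fun p => f p * F p i j)).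
  by move=> p; rewrite mxE.
exact: continuousC_M.
Qed.

Lemma continuous_mx_sum k (F : 'I_k -> T -> 'M[C]_(m, n)) :
  (forall l, continuous_mx (F l)) -> continuous_mx (fun p => \sum_(l < k) F l p).
Proof.
move=> Fc i j; apply: (continuousC_ext (g := fun p => \sum_l F l p i j)).
  by move=> p; rewrite summxE.
by apply: continuousC_sum => l; apply: Fc.
Qed.

Lemma continuous_mx_adj F : continuous_mx F -> continuous_mx (fun p => adjmx (F p)).
Proof.
move=> Fc i j; apply: (continuousC_ext (g := fun p => Num.conj (F p j i))).
  by move=> p; rewrite mxE.
exact: continuousC_conj.
Qed.

End Matrix.

Lemma continuous_mxM m n q (F : T -> 'M[C]_(m, n)) (G : T -> 'M[C]_(n, q)) :
  continuous_mx F -> continuous_mx G -> continuous_mx (fun p => F p *m G p).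
Proof.
move=> Fc Gc i j; apply: (continuousC_ext (g := fun p => \sum_k F p i k * G p k j)).
  by move=> p; rewrite mxE.
by apply: continuousC_sum => k; apply: continuousC_M.
Qed.

Lemma continuous_kron m n q r (F : T -> 'M[C]_(m, n)) (G : T -> 'M[C]_(q, r)) :
  continuous_mx F -> continuous_mx G -> continuous_mx (fun p => kron (F p) (G p)).
Proof.
move=> Fc Gc i j; apply: (continuousC_ext (g := fun p =>
  F p (mxtens_unindex i).1 (mxtens_unindex j).1 *
  G p (mxtens_unindex i).2 (mxtens_unindex j).2)).
  by move=> p; rewrite mxE.
exact: continuousC_M.
Qed.

Lemma continuous_frob2 m n (F : T -> 'M[C]_(m, n)) : continuous_mx F ->
  continuous (fun p => frob2 (F p)).
Proof.
move=> Fc; have FF := continuous_mxM Fc (continuous_mx_adj Fc).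
by have [] := continuousC_sum (fun i => FF i i).
Qed.

End ContinuityC.

Section ClosedSets.
Variables (R : realType) (T : topologicalType).
Local Notation C := (R[i]).

Lemma closed_forall (I : Type) (P : I -> T -> Prop) :
  (forall i, closed [set p | P i p]) -> closed [set p | forall i, P i p].
Proof.
move=> Pcl; rewrite (_ : [set p | _] = \bigcap_(i in setT) [set p | P i p]).
  by apply: closed_bigI => i _; apply: Pcl.
apply/seteqP; split => p /= Pp i; first by move=> _; apply: Pp.
exact: (Pp i Logic.I).
Qed.

Lemma closed_eq_cst (f : T -> R) (c : R) : continuous f -> closed [set p | f p = c].
Proof. by move=> fc; apply: (continuous_closedP f).1 fc _ (@closed_eq R c). Qed.

Lemma closed_ge0 (f : T -> R) : continuous f -> closed [set p | 0 <= f p].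
Proof. by move=> fc; apply: (continuous_closedP f).1 fc _ (@closed_ge R 0). Qed.

Lemma closed_mx_eq m n (F : T -> 'M[C]_(m, n)) (A : 'M[C]_(m, n)) :
  continuous_mx F -> closed [set p | F p = A].
Proof.
move=> Fc; pose P (ij : 'I_m * 'I_n) p :=
  complex.Re (F p ij.1 ij.2) = complex.Re (A ij.1 ij.2) /\
  complex.Im (F p ij.1 ij.2) = complex.Im (A ij.1 ij.2).
rewrite (_ : [set p | _] = [set p | forall ij, P ij p]).
  apply: closed_forall => -[i j]; have [FRe FIm] := Fc i j.
  by apply: closedI; apply: closed_eq_cst.
apply/seteqP; split => p /=; first by move=> FA ij; rewrite /P FA.
move=> FA; apply/matrixP => i j.
by have [Re_eq Im_eq] := FA (i, j); apply/eqP; rewrite eq_complex Re_eq Im_eq !eqxx.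
Qed.

Lemma continuous_mx_comp (S : topologicalType) m n (F : S -> 'M[C]_(m, n))
    (f : T -> S) : continuous f -> continuous_mx F -> continuous_mx (F \o f).
Proof.
move=> fc Fc i j; have [FRe FIm] := Fc i j.
by split => p; [exact: continuous_comp (fc p) (FRe (f p))
               |exact: continuous_comp (fc p) (FIm (f p))].
Qed.

Lemma continuous_col_mx m1 m2 n (F : T -> 'M[C]_(m1, n)) (G : T -> 'M[C]_(m2, n)) :
  continuous_mx F -> continuous_mx G -> continuous_mx (fun p => col_mx (F p) (G p)).
Proof.
move=> Fc Gc i j; apply: (continuousC_ext (g := fun p =>
  match fintype.split i with inl k => F p k j | inr k => G p k j end)).
  by move=> p; rewrite mxE.
by case: (fintype.split i).
Qed.

Lemma continuous_maxent d (F : T -> 'M[C]_d) : continuous_mx F ->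
  continuous_mx (fun p => maxent (F p)).
Proof.
move=> Fc; apply: continuous_mxM; last first.
  by apply: continuous_kron; [apply: continuous_mx_cst|apply: continuous_mx_adj].
by apply: continuous_mxM; [apply: continuous_kron|]; rewrite //; apply: continuous_mx_cst.
Qed.

End ClosedSets.

Lemma nearest_exists (R : realType) (T : topologicalType) (S : set T) m n
    (F : T -> 'M[R[i]]_(m, n)) (c : 'M[R[i]]_(m, n)) :
  compact S -> S !=set0 -> continuous_mx F -> exists x, nearest (F @` S) c x.
Proof.
move=> Scompact Sne Fc.
have dist_c : continuous (fun p => frob2 (F p - c)).
  by apply: continuous_frob2; apply: continuous_mxB => //; apply: continuous_mx_cst.
have [p Sp pmin] := @compact_EVT_min T R (fun p => frob2 (F p - c)) S Sne Scompact
  (continuous_subspaceT dist_c).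
exists (F p); split; first by exists p; first rewrite -in_setE.
by move=> _ [q Sq <-]; apply: pmin; rewrite in_setE.
Qed.

(** * Maximally entangled states and the set U *)

Section MaximallyEntangled.
Variables (R : realType) (d : nat).
Local Notation C := (R[i]).
Implicit Types U : 'M[C]_d.

Definition maxent_vec (U : 'M[C]_d) : 'cV[C]_(d * d) := kron 1%:M U *m omega d.

Lemma maxentE U : maxent U = maxent_vec U *m adjmx (maxent_vec U).
Proof. by rewrite /maxent /maxent_vec adjmxM kron_adj adjmx1 !mulmxA. Qed.

Lemma maxent_hermitian U : Defs.hermitian (maxent U).
Proof. by rewrite /Defs.hermitian maxentE adjmxM adjmxK. Qed.

Local Notation isqrt_d := (sqrtC (d%:R : C))^-1.

Lemma omegaE a b : omega d (mxtens_index (a, b)) 0 = if a == b then isqrt_d else 0.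
Proof. by rewrite mxE mxtens_indexK. Qed.

Lemma kron_mul_omegaE (P Q : 'M[C]_d) a b :
  (kron P Q *m omega d) (mxtens_index (a, b)) 0 = isqrt_d * \sum_c P a c * Q b c.
Proof.
rewrite mxE sum_mxtens mulr_sumr; apply: eq_bigr => c _.
rewrite (bigD1 c) //= big1 ?addr0 => [|e /negbTE ce]; last by rewrite omegaE eq_sym ce mulr0.
by rewrite omegaE eqxx !mxE !mxtens_indexK mulrC.
Qed.

(* The transpose trick: (conj V (x) B)|Omega> = (1 (x) B V^dagger)|Omega>. *)
Lemma kron_conj_mul_omega (V B : 'M[C]_d) :
  kron (conjmx_entry V) B *m omega d = kron 1%:M (B *m adjmx V) *m omega d.
Proof.
apply/matrixP => k z; rewrite [z]ord1; case: (mxtens_indexP k) => a b.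
rewrite !kron_mul_omegaE; congr (_ * _).
rewrite [RHS](bigD1 a) //= [X in _ = _ + X]big1 ?addr0 => [|c /negbTE ac]; last first.
  by rewrite !mxE eq_sym ac mul0r.
by rewrite !mxE eqxx mul1r; apply: eq_bigr => c _; rewrite !mxE mulrC.
Qed.

Lemma maxent_conj (V W U : 'M[C]_d) :
  let Y := kron (conjmx_entry V) W in
  Y *m maxent U *m adjmx Y = maxent (W *m U *m adjmx V).
Proof.
rewrite /= !maxentE; have <- : kron (conjmx_entry V) W *m maxent_vec U =
                               maxent_vec (W *m U *m adjmx V).
  by rewrite /maxent_vec mulmxA kron_mul mulmx1 kron_conj_mul_omega.
by rewrite adjmxM !mulmxA.
Qed.

Lemma mxtrace_maxent U : (0 < d)%N -> U \is unitarymx -> \tr (maxent U) = 1.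
Proof.
move=> d_gt0 U_unitary; rewrite maxentE mxtrace_mulC trace_mx11 /maxent_vec adjmxM.
rewrite kron_adj adjmx1 mulmxA -(mulmxA (adjmx (omega d))) kron_mul mul1mx.
rewrite unitary_adj_mulmx // kron11 mulmx1 mxE sum_mxtens.
under eq_bigr => a _.
  rewrite (bigD1 a) //= big1 ?addr0 => [|b /negbTE ab]; last first.
    by rewrite !mxE mxtens_indexK /= eq_sym ab mulr0.
  rewrite mxE omegaE eqxx; over.
have isqrt_real : Num.conj isqrt_d = isqrt_d.
  by apply: conj_Creal; rewrite realV ger0_real // sqrtC_ge0 ler0n.
rewrite sumr_const card_ord isqrt_real -invfM -expr2 sqrtCK -[LHS]mulr_natr.
by rewrite mulVf // pnatr_eq0 -lt0n.
Qed.

Lemma mxtrace_ptrace2 (X : 'M[C]_(d * d)) : \tr X = \tr (ptrace2 X).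
Proof. by rewrite /mxtrace sum_mxtens; apply: eq_bigr => a _; rewrite mxE. Qed.

Lemma mxtrace_maximally_mixed : (0 < d)%N -> \tr ((d%:R^-1)%:M : 'M[C]_d) = 1.
Proof.
by move=> d_gt0; rewrite mxtrace_scalar -[LHS]mulr_natr mulVf // pnatr_eq0 -lt0n.
Qed.

Lemma Uset_maxent1 : Uset d (maxent (1%:M : 'M[C]_d)).
Proof.
exists 1%N, (fun _ => 1), (fun _ => maxent 1%:M).
split=> [||i|]; rewrite ?big_ord1 ?rmorph1 ?scale1r //.
by exists 1%:M; rewrite //=; apply/unitarymx_adjP; rewrite adjmx1 mulmx1.
Qed.

Lemma Uset_convex : convex_mx (@Uset R d).
Proof. exact: conv_convex. Qed.

Lemma Uset_hermitian (s : 'M[C]_(d * d)) : Uset d s -> Defs.hermitian s.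
Proof.
move=> [k [lam [Y [_ _ UY ->]]]]; rewrite /Defs.hermitian adjmx_sum.
apply: eq_bigr => i _; have [U _ <-] := UY i.
by rewrite adjmxZ conj_real maxent_hermitian.
Qed.

Lemma Uset_mxtrace (s : 'M[C]_(d * d)) : (0 < d)%N -> Uset d s -> \tr s = 1.
Proof.
move=> d_gt0 [k [lam [Y [_ lam_sum UY ->]]]].
rewrite mxtrace_sum (eq_bigr (fun i => (lam i)%:C)) => [|i _].
  by rewrite -rmorph_sum lam_sum.
by have [U U_unitary <-] := UY i; rewrite mxtraceZ mxtrace_maxent ?mulr1.
Qed.

Lemma Uset_conj (V W : 'M[C]_d) (s : 'M[C]_(d * d)) :
  V \is unitarymx -> W \is unitarymx -> Uset d s ->
  let Y := kron (conjmx_entry V) W in Uset d (Y *m s *m adjmx Y).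
Proof.
move=> V_unitary W_unitary [k [lam [X [lam_ge0 lam_sum UX ->]]]] /=.
set Y := kron _ W; exists k, lam, (fun i => Y *m X i *m adjmx Y); split => //.
  move=> i; have [U U_unitary <-] := UX i; rewrite maxent_conj.
  have WUV : W *m U *m adjmx V \is unitarymx.
    by apply: mul_unitarymx; [exact: mul_unitarymx|exact: adjmx_unitary].
  by exists (W *m U *m adjmx V).
by rewrite mulmx_sumr mulmx_suml; apply: eq_bigr => i _; rewrite scalemxAl scalemxAr.
Qed.

End MaximallyEntangled.

Section DecompositionPairs.
Variables (R : realType) (d : nat) (rho : 'M[R[i]]_(d * d)).
Local Notation C := (R[i]).

(* A decomposition [rho = a.1 sp - a.2 sn] is stored as the stacked matrix
   [col_mx sp sn], whose squared Frobenius norm is |sp|^2 + |sn|^2. *)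
Definition decomp_pairs (a : R * R) : set 'M[C]_(d * d + d * d, d * d) :=
  [set Z | [/\ Uset d (usubmx Z), Uset d (dsubmx Z) &
               rho = a.1%:C *: usubmx Z - a.2%:C *: dsubmx Z]].

Lemma decomp_pairs_convex a : convex_mx (decomp_pairs a).
Proof.
move=> X Z t t01 [UX1 UX2 rhoX] [UZ1 UZ2 rhoZ].
split; [rewrite linearD !linearZ; exact: Uset_convex..|].
apply/matrixP => i j; move/matrixP/(_ i j): rhoX; move/matrixP/(_ i j): rhoZ.
rewrite !mxE => rhoZ rhoX.
by rewrite -[LHS]mul1r -(subrK t%:C 1) mulrDl {1}rhoZ rhoX; ring.
Qed.

End DecompositionPairs.

Lemma unitary_entry_bound (R : realType) n (U : 'M[R[i]]_n) a b : U \is unitarymx ->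
  complex.Re (U a b) ^+ 2 + complex.Im (U a b) ^+ 2 <= 1.
Proof.
move=> /unitarymx_adjP/matrixP/(_ a a); rewrite !mxE eqxx mulr1n => row_norm.
rewrite -lecR add_Re2_Im2 rmorph1 -row_norm (bigD1 b) //= mxE -sqr_normc lerDl.
by apply: sumr_ge0 => c _; rewrite mxE -sqr_normc exprn_ge0.
Qed.

Section Parametrization.
Variables (R : realType) (d : nat).
Local Notation C := (R[i]).
Local Notation N := (carath_bound (d * d) (d * d)).

(* A point of U is a convex combination of N maximally entangled states; the
   parameters are the N weights followed by the real and imaginary parts of
   the entries of the N unitaries. *)
Local Notation NU := (N * (d * d))%N.
Local Notation param := 'rV[R]_(N + (NU + NU)).
Local Notation re_index i a b :=
  (rshift N (lshift NU (mxtens_index (i, mxtens_index (a, b))))).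
Local Notation im_index i a b :=
  (rshift N (rshift NU (mxtens_index (i, mxtens_index (a, b))))).

Definition weight (p : param) (i : 'I_N) : R := p 0 (lshift (NU + NU) i).

Definition unitary_param (p : param) (i : 'I_N) : 'M[C]_d :=
  \matrix_(a, b) (p 0 (re_index i a b) +i* p 0 (im_index i a b)).

Definition state_of_param (p : param) : 'M[C]_(d * d) :=
  \sum_i (weight p i)%:C *: maxent (unitary_param p i).

Definition admissible : set param := [set p | [/\ forall i, 0 <= weight p i,
  \sum_i weight p i = 1 & forall i, unitary_param p i \is unitarymx]].

Definition stacked_entry (U : 'I_N -> 'M[C]_d) (l : 'I_NU) : C :=
  U (mxtens_unindex l).1 (mxtens_unindex (mxtens_unindex l).2).1
    (mxtens_unindex (mxtens_unindex l).2).2.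

Definition param_of (lam : 'I_N -> R) (U : 'I_N -> 'M[C]_d) : param :=
  \row_j match fintype.split j with
  | inl i => lam i
  | inr k => match fintype.split k with
             | inl l => complex.Re (stacked_entry U l)
             | inr l => complex.Im (stacked_entry U l)
             end
  end.

Lemma weight_param_of lam U i : weight (param_of lam U) i = lam i.
Proof. by rewrite /weight mxE (unsplitK (inl _ i)). Qed.

Lemma unitary_param_of lam U i : unitary_param (param_of lam U) i = U i.
Proof.
apply/matrixP => a b; rewrite !mxE !(unsplitK (inr _ _)) !(unsplitK (inl _ _)).
by rewrite /stacked_entry !mxtens_indexK; case: (U i a b).
Qed.

Lemma continuous_unitary_param i : continuous_mx (unitary_param ^~ i).
Proof.
move=> a b; apply: (continuousC_ext (g := fun p : param =>
  p 0 (re_index i a b) +i* p 0 (im_index i a b))); first by move=> p; rewrite mxE.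
by apply: continuousC_pair; apply: coord_continuous.
Qed.

Lemma continuous_state_of_param : continuous_mx state_of_param.
Proof.
apply: continuous_mx_sum => i; apply: continuous_mxZ.
  by apply: continuousC_real; apply: coord_continuous.
exact/continuous_maxent/continuous_unitary_param.
Qed.

Lemma admissible_bounded p : admissible p -> forall j, -1 <= p 0 j <= 1.
Proof.
move=> [w_ge0 w_sum U_unitary] j.
rewrite -(splitK j); case: (fintype.split j) => [i|k] /=.
  have w_le1 : weight p i <= 1.
    by rewrite -w_sum (bigD1 i) //= lerDl sumr_ge0.
  by move: (w_ge0 i) w_le1; rewrite /weight => ? ?; apply/andP; split; lra.
rewrite -(splitK k); case: (fintype.split k) => l /=;
  case: (mxtens_indexP l) => i ab; case: (mxtens_indexP ab) => a b;
  have := unitary_entry_bound a b (U_unitary i); rewrite mxE /= => ?;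
  apply/andP; split; nra.
Qed.

Lemma closed_admissible : closed admissible.
Proof.
rewrite (_ : admissible = [set p | forall i, 0 <= weight p i] `&`
  [set p | \sum_i weight p i = 1] `&`
  [set p | forall i, unitary_param p i *m adjmx (unitary_param p i) = 1%:M]).
  apply: closedI; first apply: closedI.
  - by apply: closed_forall => i; apply: closed_ge0; apply: coord_continuous.
  - by apply: closed_eq_cst; apply: continuous_sumr => i; apply: coord_continuous.
  - apply: closed_forall => i; apply: closed_mx_eq; apply: continuous_mxM.
      exact: continuous_unitary_param.
    exact/continuous_mx_adj/continuous_unitary_param.
apply/seteqP; split=> p [].
  by move=> ? ? U_unitary; split; [split|] => // i; apply/unitarymx_adjP.
by move=> [? ?] U_unitary; split => // i; apply/unitarymx_adjP.
Qed.

Lemma compact_admissible : compact admissible.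
Proof.
apply: subclosed_compact closed_admissible
  (rV_compact (fun=> @segment_compact R (-1) 1)) _.
by move=> p /admissible_bounded p_bd j /=; rewrite in_itv; apply: p_bd.
Qed.

Lemma Uset_state_of_param : Uset d = state_of_param @` admissible.
Proof.
apply/seteqP; split=> [s [k s_comb]|_ [p [w_ge0 w_sum U_unitary] <-]]; last first.
  exists N; exists (weight p), (fun i => maxent (unitary_param p i)); split => // i.
  by exists (unitary_param p i); first exact: U_unitary.
have k_gt0 : (0 < k)%N.
  case: k s_comb => // -[lam [Y [_ lam_sum _ _]]].
  by move/eqP: lam_sum; rewrite big_ord0 eq_sym oner_eq0.
have [lam [Y [lam_ge0 lam_sum UY ->]]] := convex_comb_bound k_gt0 s_comb.
have [U UY_eq] : exists U : 'I_N -> 'M[C]_d,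
    forall i, U i \is unitarymx /\ maxent (U i) = Y i.
  apply: (fin_all_exists (P := fun i U => U \is unitarymx /\ maxent U = Y i)) => i.
  by have [U ? <-] := UY i; exists U.
exists (param_of lam U).
  split=> [i||i]; rewrite ?weight_param_of ?unitary_param_of //.
    by under eq_bigr do rewrite weight_param_of.
  by case: (UY_eq i).
apply: eq_bigr => i _; rewrite weight_param_of unitary_param_of.
by case: (UY_eq i) => _ ->.
Qed.

Lemma Uset_nearest_exists (c : 'M[C]_(d * d)) : exists s, nearest (Uset d) c s.
Proof.
have := nearest_exists c compact_admissible _ continuous_state_of_param.
rewrite -Uset_state_of_param; apply.
by have := Uset_maxent1 R d; rewrite Uset_state_of_param => -[p adm_p _]; exists p.
Qed.

Lemma decomp_pairs_image (rho : 'M[C]_(d * d)) a :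
  decomp_pairs rho a =
  (fun pq : param * param => col_mx (state_of_param pq.1) (state_of_param pq.2)) @`
  ((admissible `*` admissible) `&`
   [set pq | a.1%:C *: state_of_param pq.1 - a.2%:C *: state_of_param pq.2 = rho]).
Proof.
apply/seteqP; split=> [Z [UZ1 UZ2 rhoZ]|_ [[p q] [[adm_p adm_q] rhopq] <-]].
  move: UZ1 UZ2; rewrite !Uset_state_of_param => -[p adm_p pZ] [q adm_q qZ].
  exists (p, q); last by rewrite /= pZ qZ vsubmxK.
  split; first exact: (conj adm_p adm_q).
  by rewrite /= pZ qZ.
split; rewrite ?col_mxKu ?col_mxKd; last exact: esym rhopq.
  by rewrite Uset_state_of_param; exists p; [exact: adm_p|exact: erefl].
by rewrite Uset_state_of_param; exists q; [exact: adm_q|exact: erefl].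
Qed.

Lemma decomp_pairs_nearest_exists (rho : 'M[C]_(d * d)) a :
  decomp_pairs rho a !=set0 -> exists Z, nearest (decomp_pairs rho a) 0 Z.
Proof.
rewrite decomp_pairs_image => -[_ [pq Spq _]].
have state1_cont : continuous_mx (fun pq : param * param => state_of_param pq.1).
  by apply: continuous_mx_comp continuous_state_of_param => x; apply: cvg_fst.
have state2_cont : continuous_mx (fun pq : param * param => state_of_param pq.2).
  by apply: continuous_mx_comp continuous_state_of_param => x; apply: cvg_snd.
apply: nearest_exists 0 _ _ (continuous_col_mx state1_cont state2_cont).
  apply: compact_closedI; first exact: compact_setX compact_admissible compact_admissible.
  apply: closed_mx_eq; apply: continuous_mxB; apply: continuous_mxZ => //;
    exact: continuousC_cst.
by exists pq.
Qed.

End Parametrization.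

(** * Separating witnesses and invariance *)

Section Witness.
Variables (R : realType) (d : nat) (rho s : 'M[R[i]]_(d * d)).
Hypotheses (d_gt0 : (0 < d)%N) (rho_hermitian : Defs.hermitian rho)
  (rho_trace : \tr rho = 1) (s_nearest : nearest (Uset d) rho s).

(* The hyperplane through the nearest point [s], orthogonal to [s - rho]. *)
Definition witness := (s - rho) - (frob_dot (s - rho) s)%:C%:M.

Let s_rho_hermitian : Defs.hermitian (s - rho).
Proof.
by rewrite /Defs.hermitian adjmxB rho_hermitian (Uset_hermitian s_nearest.1).
Qed.

Lemma witness_hermitian : Defs.hermitian witness.
Proof. by rewrite /Defs.hermitian adjmxB s_rho_hermitian adjmx_scalar conj_real. Qed.

Lemma mxtrace_witness_mul sigma : Defs.hermitian sigma -> \tr sigma = 1 ->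
  \tr (witness *m sigma) = (frob_dot (s - rho) (sigma - s))%:C.
Proof.
move=> sigma_hermitian sigma_trace.
rewrite mulmxBl mxtraceB mul_scalar_mx mxtraceZ sigma_trace mulr1.
by rewrite mxtrace_hermitian_mul // frob_dotBr rmorphB.
Qed.

Lemma witness_Wset : Wset d witness.
Proof.
split=> [|sigma sigma_U]; first exact: witness_hermitian.
rewrite mxtrace_witness_mul ?ler0c.
- exact: nearest_variational (@Uset_convex R d) s_nearest sigma_U.
- exact: Uset_hermitian sigma_U.
- exact: Uset_mxtrace d_gt0 sigma_U.
Qed.

Lemma mxtrace_witness_rho : \tr (witness *m rho) = (- frob2 (s - rho))%:C.
Proof.
by rewrite mxtrace_witness_mul // -[rho - s]opprB frob_dotNr.
Qed.

End Witness.

Section Commutant.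
Variables (R : realType) (T : Type) (d : nat) (V Vt : T -> 'M[R[i]]_d).
Hypotheses (V_unitary : forall g, V g \is unitarymx)
           (Vt_unitary : forall g, Vt g \is unitarymx).
Local Notation C := (R[i]).
Local Notation Y g := (kron (conjmx_entry (V g)) (Vt g)).
Local Notation "''G'" := (commutant d V Vt).

Lemma twirl_unitary g : Y g \is unitarymx.
Proof. by apply: kron_unitary; rewrite // /conjmx_entry conjC_unitary. Qed.

Lemma commutantE X : 'G X <-> forall g, Y g *m X *m adjmx (Y g) = X.
Proof.
split=> XG g; first exact/(unitary_conj_commute _ (twirl_unitary g)).1/XG.
exact/(unitary_conj_commute _ (twirl_unitary g)).2/XG.
Qed.

Lemma Uset_twirl g s : Uset d s -> Uset d (Y g *m s *m adjmx (Y g)).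
Proof. exact: Uset_conj. Qed.

Lemma frob2_twirl_sub g X rho : 'G rho ->
  frob2 (Y g *m X *m adjmx (Y g) - rho) = frob2 (X - rho).
Proof.
move=> /commutantE/(_ g) rhoG.
by rewrite -{1}rhoG -mulmxBl -mulmxBr frob2_unitary_conj ?twirl_unitary.
Qed.

Lemma nearest_Uset_commutant rho s : 'G rho -> nearest (Uset d) rho s -> 'G s.
Proof.
move=> rhoG s_near; apply/commutantE => g.
apply: (nearest_fixed (f := fun y => Y g *m y *m adjmx (Y g)) (@Uset_convex R d) s_near).
  exact: Uset_twirl.
by move=> y; apply: frob2_twirl_sub.
Qed.

Lemma witness_commutant rho s : 'G rho -> 'G s -> 'G (witness rho s).
Proof.
move=> rhoG sG g /=; rewrite /witness !mulmxBl !mulmxBr.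
by rewrite (rhoG g) (sG g) scalar_mxC.
Qed.

Lemma Uset_witnessP rho : (0 < d)%N -> Defs.hermitian rho -> \tr rho = 1 -> 'G rho ->
  Uset d rho <-> forall W, Wset d W -> 'G W -> 0 <= \tr (W *m rho).
Proof.
move=> d_gt0 rho_hermitian rho_trace rhoG; split=> [rhoU W [_ W_ge0] _|W_ge0].
  exact: W_ge0.
have [s s_nearest] := Uset_nearest_exists rho.
have sG := nearest_Uset_commutant rhoG s_nearest.
have := W_ge0 _ (witness_Wset d_gt0 rho_hermitian s_nearest)
  (witness_commutant rhoG sG).
rewrite mxtrace_witness_rho // ler0c oppr_ge0 => dist_le0.
have /frob2_eq0/eqP : frob2 (s - rho) = 0.
  by apply/eqP; rewrite eq_le dist_le0 frob2_ge0.
by rewrite subr_eq0 => /eqP <-; exact: s_nearest.1.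
Qed.

Section Decompositions.
Variable rho : 'M[C]_(d * d).
Hypothesis rhoG : 'G rho.

Lemma nearest_decomp_pairs_commutant a Z : nearest (decomp_pairs rho a) 0 Z ->
  'G (usubmx Z) /\ 'G (dsubmx Z).
Proof.
move=> Z_nearest; pose twirl2 g (X : 'M[C]_(d * d + d * d, d * d)) :=
  col_mx (Y g *m usubmx X *m adjmx (Y g)) (Y g *m dsubmx X *m adjmx (Y g)).
have twirl2_fixed g : twirl2 g Z = Z.
  apply: (nearest_fixed (f := twirl2 g) (@decomp_pairs_convex R d rho a) Z_nearest).
    move=> X [UX1 UX2 rhoX].
    rewrite /twirl2; split; rewrite ?col_mxKu ?col_mxKd; try exact: Uset_twirl.
    have -> : forall u l : 'M[C]_(d * d),
        a.1%:C *: (Y g *m u *m adjmx (Y g)) - a.2%:C *: (Y g *m l *m adjmx (Y g)) =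
        Y g *m (a.1%:C *: u - a.2%:C *: l) *m adjmx (Y g).
      by move=> u l; rewrite mulmxBr mulmxBl -!scalemxAr -!scalemxAl.
    by rewrite -rhoX ((commutantE _).1 rhoG g).
  move=> X; rewrite !subr0 /twirl2 frob2_col_mx !frob2_unitary_conj ?twirl_unitary //.
  by rewrite -frob2_col_mx vsubmxK.
split; apply/commutantE => g; have := twirl2_fixed g.
  by move/(congr1 usubmx); rewrite col_mxKu.
by move/(congr1 dsubmx); rewrite col_mxKd.
Qed.

Lemma decomps_commutant a :
  decomps (Uset d) rho a -> decomps (Uset d `&` 'G) rho a.
Proof.
move=> [sp [sn [a1_ge0 a2_ge0 Usp Usn rho_decomp]]].
have [|Z Z_nearest] := decomp_pairs_nearest_exists (a := a) (rho := rho).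
  by exists (col_mx sp sn); split; rewrite ?col_mxKu ?col_mxKd.
have [[UZ1 UZ2 rhoZ] _] := Z_nearest.
have [G1 G2] := nearest_decomp_pairs_commutant Z_nearest.
by exists (usubmx Z), (dsubmx Z).
Qed.

End Decompositions.

End Commutant.

Theorem proposition4 (R : realType) (Gt : topologicalType)
    (mul : Gt -> Gt -> Gt) (inv : Gt -> Gt) (e : Gt)
    (d : nat) (V Vt : Gt -> 'M[R[i]]_d) (rho : 'M[R[i]]_(d * d)) :
  (0 < d)%N ->
  is_compact_group mul inv e ->
  unitary_rep mul e V -> unitary_rep mul e Vt ->
  Sset d rho -> commutant d V Vt rho ->
  [/\ (Uset d rho <->
       (forall W, Wset d W -> commutant d V Vt W -> 0 <= \tr (W *m rho))),
      ereal_inf [set ((a.1 + a.2)%:E) | a in decomps (Uset d) rho] =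
      ereal_inf [set ((a.1 + a.2)%:E) |
                 a in decomps (Uset d `&` commutant d V Vt) rho] &
      ereal_inf [set (a.2%:E) | a in decomps (Uset d) rho] =
      ereal_inf [set (a.2%:E) |
                 a in decomps (Uset d `&` commutant d V Vt) rho]].
Proof.
move=> d_gt0 _ [_ _ V_unitary _] [_ _ Vt_unitary _].
move=> [[rho_hermitian _] [_ rho_ptrace2]] rhoG.
have rho_trace : \tr rho = 1.
  by rewrite mxtrace_ptrace2 rho_ptrace2 mxtrace_maximally_mixed.
have decompsE : decomps (Uset d `&` commutant d V Vt) rho = decomps (Uset d) rho.
  apply/seteqP; split=> a; last exact: decomps_commutant.
  by move=> [sp [sn [? ? [? _] [? _] ?]]]; exists sp, sn.
by split; rewrite ?decompsE //; apply: Uset_witnessP.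
Qed.
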